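(* Let $k_1<k_2$ and let $p_1,\ldots,p_\ell$ be the primes in $S(k_1,k_2):=\{p\in\mathcal{P}:k_1<p\le k_2\}$. Let $n,m\in\mathbb{N}$ satisfy $m\prod_{j=1}^{\ell}p_j\le n<(m+1)\prod_{j=1}^{\ell}p_j$. Let $X_1,\ldots,X_n$ be i.i.d. uniform on $\{1,\ldots,n\}$, and let $\tilde X_1,\ldots,\tilde X_n$ be i.i.d. with $\tilde X_i=p_1^{c_1}\cdots p_\ell^{c_\ell}$ where $c_1,\ldots,c_\ell$ are independent Bernoulli variables with parameters $1/p_1,\ldots,1/p_\ell$. For a prime $q$ let $Y_q:=\#\{i:q\mid X_i\}$ and $\tilde Y_q:=\#\{i:q\mid\tilde X_i\}$. Then there exists a coupling $\mu$ of $(X_i)_{i\le n}$ and $(\tilde X_i)_{i\le n}$ (a probability measure with these two marginal laws) such that for every $\epsilon>0$, \[ \mu\left(\sum_{q\in S(k_{1},k_{2})}Y_{q}^{2}-\sum_{q\in S(k_{1},k_{2})}\tilde{Y}_{q}^{2}\geq n^{2}\epsilon\right)\leq2^{n}\left(\frac{1}{m}\right)^{\frac{n\epsilon}{2k_{2}}}. \]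
   Context: $\mathcal{P}$ denotes the set of primes. *)

From Stdlib Require Import Reals.
From mathcomp Require Import all_boot.
Unset Printing Implicit Defensive.

Definition Sprimes (k1 k2 : nat) : seq nat :=
  [seq p <- iota k1.+1 (k2 - k1) | prime p].

Definition primeprod (k1 k2 : nat) : nat := \prod_(p <- Sprimes k1 k2) p.

(* Joint sample space: (X_1..X_n) with X_i = x i + 1 in {1..n}, and
   (Xt_1..Xt_n) where Xt_i is encoded by the set of primes dividing it
   (the set of j with c_j = 1), Xt_i = prod_{p in y i} p. *)
Definition Omega (n k2 : nat) : finType :=
  ({ffun 'I_n -> 'I_n} * {ffun 'I_n -> {set 'I_k2.+1}})%type.

Definition Xval (n : nat) (x : {ffun 'I_n -> 'I_n}) (i : 'I_n) : nat := (x i).+1.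

Definition Xtval (k2 : nat) (A : {set 'I_k2.+1}) : nat := \prod_(p in A) (p : nat).

Definition Ycount (n : nat) (v : 'I_n -> nat) (q : nat) : nat :=
  #|[set i : 'I_n | q %| v i]|.

Definition sumsqY (k1 k2 n : nat) (v : 'I_n -> nat) : nat :=
  \sum_(q <- Sprimes k1 k2) (Ycount n v q) ^ 2.

Local Open Scope R_scope.

(* Law of a single Xt_i: c_p ~ Bernoulli(1/p) independent for p in S;
   probability that the set of p with c_p = 1 equals A. *)
Definition tlaw (k1 k2 : nat) (A : {set 'I_k2.+1}) : R :=
  if [forall p : 'I_k2.+1, (p \in A) ==> ((p : nat) \in Sprimes k1 k2)] then
    \big[Rmult/R1]_(p : 'I_k2.+1 | (p : nat) \in Sprimes k1 k2)
       (if p \in A then / INR p else 1 - / INR p)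
  else 0.

Definition is_coupling (k1 k2 n : nat) (mu : Omega n k2 -> R) : Prop :=
  (forall w, 0 <= mu w) /\
  \big[Rplus/R0]_(w : Omega n k2) mu w = 1 /\
  (forall x : {ffun 'I_n -> 'I_n},
      \big[Rplus/R0]_(y : {ffun 'I_n -> {set 'I_k2.+1}}) mu (x, y) = (/ INR n) ^ n) /\
  (forall y : {ffun 'I_n -> {set 'I_k2.+1}},
      \big[Rplus/R0]_(x : {ffun 'I_n -> 'I_n}) mu (x, y)
        = \big[Rmult/R1]_(i : 'I_n) tlaw k1 k2 (y i)).

Definition event_prob (k1 k2 n : nat) (mu : Omega n k2 -> R) (eps : R) : R :=
  \big[Rplus/R0]_(w : Omega n k2)
    (if Rle_dec (INR n ^ 2 * eps)
          (INR (sumsqY k1 k2 n (Xval n w.1)) - INR (sumsqY k1 k2 n (fun i => Xtval k2 (w.2 i))))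
     then mu w else 0).

(* Write P = primeprod k1 k2, N = m P, and encode X_i = x_i + 1 with x_i in
   'I_n and Xt_i by the set A_i of primes p of S = S(k1,k2) with c_p = 1.
   The coupling draws the pairs (x_i, A_i) independently with law
     kernel (x, A) = 1/n * ( [x < N] [A = divset x] + [x >= N] tlaw A ),
   where divset x is the set of primes of S dividing x + 1: on the "regular"
   range x < N the variable Xt is read off from X, on the remaining range it
   is drawn independently.
   1. Counting: by the Chinese remainder theorem the residues of x + 1 modulo
      the primes of S are independent and uniform on every period of length
      P, so exactly N tlaw(A) of the x < N have divset x = A.  Hence kernel
      has marginals uniform and tlaw, and the product measure is a coupling.
   2. Comparison: on the support, Y_q <= Yt_q + B, where B is the number of
      irregular coordinates (x_i >= N); so sum Y_q^2 - sum Yt_q^2 <= 2 k2 n B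
      and the event of the theorem forces B >= n eps / (2 k2).
   3. Tail bound: under the uniform law, a union bound over the possible sets
      of irregular coordinates gives P(B >= t) <= 2^n ((n - N) / n)^t, and
      (n - N) m <= n because n < N + P <= (m + 1) P. *)

From HB Require Import structures.
From Stdlib Require Import Reals Lra Lia.
From mathcomp Require Import all_boot zify.
Local Open Scope R_scope.

Lemma RplusA : associative Rplus. Proof. by move=> *; rewrite Rplus_assoc. Qed.
Lemma RmultA : associative Rmult. Proof. by move=> *; rewrite Rmult_assoc. Qed.
HB.instance Definition _ :=
  Monoid.isComLaw.Build R R0 Rplus RplusA Rplus_comm Rplus_0_l.
HB.instance Definition _ :=
  Monoid.isComLaw.Build R R1 Rmult RmultA Rmult_comm Rmult_1_l.
HB.instance Definition _ := Monoid.isMulLaw.Build R R0 Rmult Rmult_0_l Rmult_0_r.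
HB.instance Definition _ :=
  Monoid.isAddLaw.Build R Rmult Rplus Rmult_plus_distr_r Rmult_plus_distr_l.

Lemma INR_sum (I : Type) (r : seq I) (P : pred I) (F : I -> nat) :
  INR (\sum_(i <- r | P i) F i)%N = \big[Rplus/R0]_(i <- r | P i) INR (F i).
Proof. by apply: (big_morph INR) => //; exact: plus_INR. Qed.

Lemma INR_prod (I : Type) (r : seq I) (P : pred I) (F : I -> nat) :
  INR (\prod_(i <- r | P i) F i)%N = \big[Rmult/R1]_(i <- r | P i) INR (F i).
Proof. by apply: (big_morph INR) => //; exact: mult_INR. Qed.

Lemma INR_expn (a k : nat) : INR (a ^ k)%N = INR a ^ k.
Proof. by elim: k => [|k IH] //; rewrite expnS mult_INR IH. Qed.

Lemma Rsum_ge0 (I : Type) (r : seq I) (P : pred I) (F : I -> R) :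
  (forall i, P i -> 0 <= F i) -> 0 <= \big[Rplus/R0]_(i <- r | P i) F i.
Proof. by move=> F0; apply: big_ind => // *; lra. Qed.

Lemma Rprod_ge0 (I : Type) (r : seq I) (P : pred I) (F : I -> R) :
  (forall i, P i -> 0 <= F i) -> 0 <= \big[Rmult/R1]_(i <- r | P i) F i.
Proof. by move=> F0; apply: big_ind => // *; [lra | nra]. Qed.

Lemma Rsum_le (I : Type) (r : seq I) (P : pred I) (F G : I -> R) :
  (forall i, P i -> F i <= G i) ->
  \big[Rplus/R0]_(i <- r | P i) F i <= \big[Rplus/R0]_(i <- r | P i) G i.
Proof. by move=> FG; apply: (big_ind2 Rle) => // *; lra. Qed.

Lemma Rprod_le (I : Type) (r : seq I) (P : pred I) (F G : I -> R) :
  (forall i, P i -> 0 <= F i <= G i) ->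
  \big[Rmult/R1]_(i <- r | P i) F i <= \big[Rmult/R1]_(i <- r | P i) G i.
Proof.
move=> FG; suff [] : 0 <= \big[Rmult/R1]_(i <- r | P i) F i
                       <= \big[Rmult/R1]_(i <- r | P i) G i by [].
by apply: (big_ind2 (fun x y => 0 <= x <= y)) => // *; nra.
Qed.

Lemma Rsum_const (I : finType) (A : {pred I}) (c : R) :
  \big[Rplus/R0]_(i in A) c = INR #|A| * c.
Proof.
rewrite big_const; elim: #|A| => [|k IH] /=; first lra.
by rewrite IH; case: k {IH} => [|k] /=; lra.
Qed.

Lemma Rsum_constT (I : finType) (c : R) : \big[Rplus/R0]_(i : I) c = INR #|I| * c.
Proof.
rewrite big_const; elim: #|I| => [|k IH] /=; first lra.
by rewrite IH; case: k {IH} => [|k] /=; lra.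
Qed.

Lemma Rprod_const (I : finType) (A : {pred I}) (c : R) :
  \big[Rmult/R1]_(i in A) c = c ^ #|A|.
Proof. by rewrite big_const; elim: #|A| => [|k IH] //=; rewrite IH. Qed.

Lemma Rprod_constT (I : finType) (c : R) : \big[Rmult/R1]_(i : I) c = c ^ #|I|.
Proof. by rewrite big_const; elim: #|I| => [|k IH] //=; rewrite IH. Qed.

Section Counting.
Local Open Scope nat_scope.

(* Counting form of the Chinese remainder theorem: for coprime a and b the
   residues (x mod a, x mod b) of x < a * b run over all pairs exactly once. *)
Lemma count_crt2 (a b : nat) (f g : nat -> bool) :
  0 < a -> 0 < b -> coprime a b ->
  \sum_(x < a * b) (f (x %% a) && g (x %% b) : nat)
  = (\sum_(x < a) (f x : nat)) * (\sum_(y < b) (g y : nat)).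
Proof.
move=> a0 b0 co.
pose h (x : 'I_(a * b)) := (Ordinal (ltn_pmod x a0), Ordinal (ltn_pmod x b0)).
have h_inj : injective h.
  move=> x y /(congr1 (fun u => (val u.1, val u.2))) [ha hb]; apply/val_inj.
  have : x == y %[mod a * b] by rewrite chinese_remainder // ha hb !eqxx.
  by rewrite !modn_small // => /eqP.
have h_bij : bijective h by apply: inj_card_bij => //; rewrite card_prod !card_ord.
rewrite big_distrlr pair_big /= (reindex h) /=; last exact: onW_bij.
by apply: eq_bigr => x _; case: (f _); case: (g _).
Qed.

Lemma coprime_prod (T : eqType) (r : seq T) (d : T -> nat) (a : nat) :
  (forall t, t \in r -> coprime a (d t)) -> coprime a (\prod_(t <- r) d t).
Proof.
move=> co; rewrite big_seq; apply: (big_ind (coprime a)) => [|u v|t tr].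
- exact: coprimen1.
- by rewrite coprimeMr => -> ->.
- exact: co.
Qed.

Lemma count_crt (T : eqType) (r : seq T) (d : T -> nat) (phi : T -> nat -> bool) :
  uniq r -> (forall t, t \in r -> 0 < d t) ->
  {in r &, forall s t, s != t -> coprime (d s) (d t)} ->
  \sum_(x < \prod_(t <- r) d t) (all (fun t => phi t (x %% d t)) r : nat)
  = \prod_(t <- r) \sum_(y < d t) (phi t y : nat).
Proof.
elim: r => [|t r IH] /=; first by rewrite !big_nil big_ord1.
move=> /andP [tr ur] d_gt0 co; rewrite !big_cons.
set D := \prod_(s <- r) d s.
have dt_gt0 : 0 < d t by apply: d_gt0; rewrite inE eqxx.
have D_gt0 : 0 < D.
  rewrite /D big_seq; apply: (big_ind (leq 1)) => // [u v|s sr].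
    by rewrite muln_gt0 => -> ->.
  by apply: d_gt0; rewrite inE sr orbT.
have coD : coprime (d t) D.
  apply: coprime_prod => s sr; apply: co; rewrite ?inE ?sr ?eqxx ?orbT //.
  by apply: contraNneq tr => ->.
have dvdD s : s \in r -> d s %| D by move=> sr; rewrite /D (bigD1_seq s) //= dvdn_mulr.
have {}IH : \sum_(x < D) (all (fun s => phi s (x %% d s)) r : nat)
               = \prod_(s <- r) \sum_(y < d s) (phi s y : nat).
  apply: IH => // [s sr|s u sr ur']; first by apply: d_gt0; rewrite inE sr orbT.
  by apply: co; rewrite inE ?sr ?ur' orbT.
rewrite -IH -(count_crt2 _ _ _ (fun y => all (fun s => phi s (y %% d s)) r)) //.
apply: eq_bigr => x _; congr (nat_of_bool (_ && _)).
by apply: eq_in_all => s sr; rewrite (modn_dvdm x (dvdD s sr)).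
Qed.

Lemma sum_periodic (m P : nat) (G : nat -> nat) :
  \sum_(x < m * P) G (x %% P) = m * \sum_(x < P) G x.
Proof.
elim: m => [|m IH]; first by rewrite big_ord0.
rewrite mulSn big_split_ord /= mulSn -IH; congr (_ + _).
  by apply: eq_bigr => i _; rewrite modn_small.
by apply: eq_bigr => i _; rewrite modnDl.
Qed.

Lemma count_dvd_succ (p : nat) (b : bool) : 0 < p ->
  \sum_(y < p) ((p %| y.+1) == b : nat) = if b then 1 else p.-1.
Proof.
case: p => // p _; rewrite big_ord_recr /= dvdnn.
have ndvd (y : 'I_p) : (p.+1 %| y.+1) = false.
  by apply/negbTE/negP => /(dvdn_leq (ltn0Sn _)); have := ltn_ord y; lia.
case: b => /=; first by rewrite big1 // => y _; rewrite ndvd.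
rewrite addn0 (eq_bigr (fun _ => 1)) => [|y _]; last by rewrite ndvd.
by rewrite sum_nat_const card_ord muln1.
Qed.

Lemma dvdn_succ_mod (t x : nat) : (t %| (x %% t).+1) = (t %| x.+1).
Proof. by rewrite /dvdn -[(x %% t).+1]addn1 -[x.+1]addn1 modnDml. Qed.

Lemma card_ord_geq (n N : nat) : N <= n -> #|[pred x : 'I_n | N <= x]| = n - N.
Proof.
move=> le_Nn; rewrite -sum1_card (eq_bigl (fun x : 'I_n => N <= x)) //.
rewrite -(big_mkord (fun i => N <= i) (fun _ => 1)).
rewrite (big_cat_nat (leq0n N) le_Nn) /= big_nat_cond big1 => [|i]; last first.
  by case/andP => /andP [_ iN]; rewrite leqNgt iN.
rewrite add0n -[n - N]muln1 -sum_nat_const_nat big_nat_cond [RHS]big_nat_cond.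
by apply: eq_bigl => i; rewrite andbT andbC andbA andbb.
Qed.

Lemma sum_indicator (I : finType) (P : pred I) : \sum_(i : I) (P i : nat) = #|P|.
Proof.
by rewrite -sum1_card [RHS]big_mkcond; apply: eq_bigr => i _; rewrite unfold_in; case: (P i).
Qed.

End Counting.

Section PrimeWindow.
Variables k1 k2 : nat.

Lemma mem_Sprimes (q : nat) :
  (q \in Sprimes k1 k2) = [&& prime q, k1 < q & q <= k2]%N.
Proof.
rewrite mem_filter mem_iota; case: (prime q) => //=.
by case: (ltnP k1 q) => //= ?; apply/idP/idP; lia.
Qed.

Lemma Sprimes_uniq : uniq (Sprimes k1 k2).
Proof. by rewrite filter_uniq // iota_uniq. Qed.

Lemma size_Sprimes : (size (Sprimes k1 k2) <= k2)%N.
Proof. by rewrite size_filter (leq_trans (count_size _ _)) // size_iota leq_subr. Qed.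

Lemma primeprod_gt0 : (0 < primeprod k1 k2)%N.
Proof.
rewrite /primeprod big_seq; apply: (big_ind (leq 1)) => // [u v|p].
  by rewrite muln_gt0 => -> ->.
by rewrite mem_Sprimes => /and3P [/prime_gt0].
Qed.

Definition in_window (p : 'I_k2.+1) : bool := (p : nat) \in Sprimes k1 k2.

Lemma in_window_prime {p : 'I_k2.+1} : in_window p -> prime p.
Proof. by rewrite /in_window mem_Sprimes => /and3P []. Qed.

Lemma big_window {T : Type} {idx : T} (op : Monoid.com_law idx) (F : nat -> T) :
  \big[op/idx]_(p : 'I_k2.+1 | in_window p) F p = \big[op/idx]_(q <- Sprimes k1 k2) F q.
Proof.
rewrite /in_window -(big_mkord (fun q => q \in Sprimes k1 k2)) -big_filter.
apply: perm_big; apply: uniq_perm; rewrite ?filter_uniq ?iota_uniq ?Sprimes_uniq //.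
move=> q; rewrite mem_filter mem_iota; case qS: (q \in Sprimes k1 k2) => //=.
by move: qS; rewrite mem_Sprimes => /and3P [_ _]; lia.
Qed.

Definition bern_factor (p : 'I_k2.+1) (b : bool) : R :=
  if in_window p then (if b then / INR p else 1 - / INR p) else (if b then 0 else 1).

Lemma tlawE (A : {set 'I_k2.+1}) :
  tlaw k1 k2 A = \big[Rmult/R1]_(p : 'I_k2.+1) bern_factor p (p \in A).
Proof.
rewrite /tlaw; case: ifP => [/forallP A_sub | /negbT].
  rewrite [RHS](bigID in_window) /= [X in _ = _ * X]big1 ?Rmult_1_r => [|p pS].
    by apply: eq_bigr => p pS; rewrite /bern_factor /in_window pS.
  rewrite /bern_factor (negbTE pS); have := A_sub p.
  by rewrite /in_window in pS; rewrite (negbTE pS) implybF => /negbTE ->.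
rewrite negb_forall => /existsP [p]; rewrite negb_imply => /andP [pA pS].
by rewrite (bigD1 p) //= /bern_factor /in_window (negbTE pS) pA Rmult_0_l.
Qed.

Lemma bern_factor_ge0 (p : 'I_k2.+1) (b : bool) : 0 <= bern_factor p b.
Proof.
rewrite /bern_factor; case pS: (in_window p); last by case: b; lra.
have p_gt1 : 1 < INR p by apply: lt_1_INR; have := prime_gt1 (in_window_prime pS); lia.
have : 0 < / INR p < 1.
  by split; [apply: Rinv_0_lt_compat | rewrite -Rinv_1; apply: Rinv_1_lt_contravar]; lra.
by case: b; lra.
Qed.

Lemma tlaw_ge0 (A : {set 'I_k2.+1}) : 0 <= tlaw k1 k2 A.
Proof. by rewrite tlawE; apply: Rprod_ge0 => p _; exact: bern_factor_ge0. Qed.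

(* tlaw is a probability: expanding the product of the (1/p + (1 - 1/p)). *)
Lemma sum_tlaw : \big[Rplus/R0]_(A : {set 'I_k2.+1}) tlaw k1 k2 A = 1.
Proof.
under eq_bigr do rewrite tlawE.
pose toSet (f : {ffun 'I_k2.+1 -> bool}) := [set p | f p].
rewrite (reindex toSet) /=; last first.
  exists (fun A : {set 'I_k2.+1} => [ffun p => p \in A]) => [f _|A _].
    by apply/ffunP => p; rewrite ffunE inE.
  by apply/setP => p; rewrite inE ffunE.
under eq_bigr do under eq_bigr do rewrite inE.
rewrite -(bigA_distr_bigA bern_factor) /=.
apply: big1 => p _; rewrite big_bool /bern_factor; change R1 with 1.
by case: (in_window p) => /=; lra.
Qed.

(* The set of primes of S dividing x + 1, i.e. the value of Xt determined by
   X = x + 1 through c_p = [p | X]. *)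
Definition divset (x : nat) : {set 'I_k2.+1} := [set p | in_window p && (p %| x.+1)%N].

(* Counting the x < m * P with a prescribed divisibility pattern A: the
   residues of x + 1 modulo the primes of S are independent (CRT). *)
Lemma count_divset (m : nat) (A : {set 'I_k2.+1}) :
  {subset A <= in_window} ->
  (\sum_(x < m * primeprod k1 k2) (divset x == A : nat)
   = m * \prod_(p : 'I_k2.+1 | in_window p) (if p \in A then 1 else (p : nat).-1))%N.
Proof.
move=> A_sub; pose r := enum in_window.
have P_r : primeprod k1 k2 = (\prod_(t <- r) (t : nat))%N.
  by rewrite /primeprod -(big_window muln id) /r big_enum.
pose pattern (p : 'I_k2.+1) (y : nat) := ((p : nat) %| y.+1) == (p \in A).
have dvdP t : t \in r -> (t %| primeprod k1 k2)%N.
  by move=> tr; rewrite P_r (bigD1_seq t) ?enum_uniq //= dvdn_mulr.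
have patternE x : (divset x == A) =
    all (fun t => pattern t ((x %% primeprod k1 k2) %% t)) r.
  rewrite (eq_in_all (a2 := fun t => pattern t (x %% t))); last first.
    by move=> t tr /=; rewrite (modn_dvdm x (dvdP t tr)).
  apply/eqP/allP => [divA t | match_x].
    rewrite mem_enum => tS; have tW : in_window t := tS.
    by rewrite /pattern -divA inE tW /= dvdn_succ_mod.
  apply/setP => p; rewrite inE; case pS: (in_window p) => /=.
    have pr : p \in r by rewrite mem_enum; exact: pS.
    by have /eqP := match_x p pr; rewrite /pattern dvdn_succ_mod => ->.
  by apply/esym/negbTE; apply: contraFN pS => /A_sub.
under eq_bigr do rewrite patternE.
rewrite (sum_periodic m _ (fun y => all (fun t => pattern t (y %% t)) r)) P_r.
rewrite count_crt ?enum_uniq //.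
- congr (_ * _)%N; rewrite /r big_enum /=; apply: eq_bigr => p pS.
  by rewrite count_dvd_succ // prime_gt0 // in_window_prime.
- by move=> t; rewrite mem_enum => /in_window_prime /prime_gt0.
move=> s t; rewrite !mem_enum => /in_window_prime s_pr /in_window_prime t_pr st.
by rewrite prime_coprime // dvdn_prime2.
Qed.

Lemma count_divsetR (m : nat) (A : {set 'I_k2.+1}) :
  INR (\sum_(x < m * primeprod k1 k2) (divset x == A : nat))%N
  = INR (m * primeprod k1 k2) * tlaw k1 k2 A.
Proof.
rewrite /tlaw; case: ifP => [/forallP A_sub | /negbT]; last first.
  rewrite negb_forall => /existsP [p]; rewrite negb_imply => /andP [pA pS].
  rewrite Rmult_0_r big1 // => x _; case: eqP => // divA.
  by move: pA; rewrite -divA inE => /andP [pW _]; case/negP: pS.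
rewrite count_divset => [|p pA]; last by have /implyP := A_sub p; apply.
rewrite !mult_INR Rmult_assoc /primeprod -(big_window muln id) !INR_prod -big_split.
congr (_ * _); apply: eq_bigr => p pS /=.
have p_gt1 := prime_gt1 (in_window_prime pS).
have p0 : INR p <> 0 by apply: not_0_INR; lia.
case: (p \in A) => /=; first by field.
by rewrite -subn1 minus_INR /=; [field | lia].
Qed.

End PrimeWindow.

Section Coupling.
Variables k1 k2 n N : nat.
Hypothesis n_gt0 : (0 < n)%N.

Definition kernel (x : 'I_n) (A : {set 'I_k2.+1}) : R :=
  / INR n * (if (x < N)%N then INR (divset k1 k2 x == A) else tlaw k1 k2 A).

Definition coupling (w : Omega n k2) : R :=
  \big[Rmult/R1]_(i : 'I_n) kernel (w.1 i) (w.2 i).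

Lemma invn_gt0 : 0 < / INR n.
Proof. by apply/Rinv_0_lt_compat/lt_0_INR; lia. Qed.

Lemma kernel_ge0 (x : 'I_n) (A : {set 'I_k2.+1}) : 0 <= kernel x A.
Proof.
apply: Rmult_le_pos; first exact: Rlt_le invn_gt0.
by case: (x < N)%N; [exact: pos_INR | exact: tlaw_ge0].
Qed.

Lemma coupling_ge0 (w : Omega n k2) : 0 <= coupling w.
Proof. by apply: Rprod_ge0 => i _; exact: kernel_ge0. Qed.

Lemma kernel_marginal_x (x : 'I_n) :
  \big[Rplus/R0]_(A : {set 'I_k2.+1}) kernel x A = / INR n.
Proof.
rewrite -big_distrr /=; case: (x < N)%N; last by rewrite sum_tlaw Rmult_1_r.
rewrite (bigD1 (divset k1 k2 x)) //= eqxx big1 => [|A /negbTE]; last first.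
  by rewrite eq_sym => ->.
by rewrite /= Rplus_0_r Rmult_1_r.
Qed.

Lemma coupling_support (w : Omega n k2) : coupling w <> 0 ->
  forall i, (w.1 i < N)%N -> w.2 i = divset k1 k2 (w.1 i).
Proof.
move=> nz i lt_iN; apply/eqP; apply/negPn/negP => neq; apply: nz.
by rewrite /coupling (bigD1 i) //= /kernel lt_iN eq_sym (negbTE neq) /= !Rmult_0_r Rmult_0_l.
Qed.

Lemma coupling_marginal_x (x : {ffun 'I_n -> 'I_n}) :
  \big[Rplus/R0]_(y : {ffun 'I_n -> {set 'I_k2.+1}}) coupling (x, y) = (/ INR n) ^ n.
Proof.
rewrite /coupling /= -(bigA_distr_bigA (fun i => kernel (x i))) /=.
by under eq_bigr do rewrite kernel_marginal_x; rewrite Rprod_constT card_ord.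
Qed.

Lemma coupling_total : \big[Rplus/R0]_(w : Omega n k2) coupling w = 1.
Proof.
rewrite -(pair_big xpredT xpredT (fun x y => coupling (x, y))) /=.
under eq_bigr do rewrite coupling_marginal_x.
rewrite Rsum_constT card_ffun !card_ord INR_expn -Rpow_mult_distr Rinv_r ?pow1 //.
by apply: not_0_INR; lia.
Qed.

Variable m : nat.
Hypothesis N_def : N = (m * primeprod k1 k2)%N.
Hypothesis N_le_n : (N <= n)%N.

(* The second marginal of kernel is tlaw: the x < N contribute N * tlaw A by
   count_divsetR, the other n - N contribute (n - N) * tlaw A. *)
Lemma kernel_marginal_A (A : {set 'I_k2.+1}) :
  \big[Rplus/R0]_(x : 'I_n) kernel x A = tlaw k1 k2 A.
Proof.
rewrite -big_distrr (bigID (fun x : 'I_n => x < N)%N) /=.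
have below : \big[Rplus/R0]_(x : 'I_n | (x < N)%N)
    (if (x < N)%N then INR (divset k1 k2 x == A) else tlaw k1 k2 A)
    = INR N * tlaw k1 k2 A.
  rewrite (eq_bigr (fun x : 'I_n => INR (divset k1 k2 x == A))) => [|x -> //].
  rewrite -(big_ord_widen _ (fun x => INR (divset k1 k2 x == A))) //.
  by rewrite -INR_sum N_def count_divsetR.
have beyond : \big[Rplus/R0]_(x : 'I_n | ~~ (x < N)%N)
    (if (x < N)%N then INR (divset k1 k2 x == A) else tlaw k1 k2 A)
    = (INR n - INR N) * tlaw k1 k2 A.
  rewrite (eq_bigr (fun _ => tlaw k1 k2 A)) => [|x /negbTE -> //].
  rewrite (eq_bigl (fun x => x \in [pred x : 'I_n | N <= x]%N)) => [|x]; last first.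
    by rewrite inE -leqNgt.
  by rewrite Rsum_const card_ord_geq // minus_INR //; apply/leP.
rewrite below beyond; field; apply: not_0_INR; lia.
Qed.

Lemma coupling_marginal_y (y : {ffun 'I_n -> {set 'I_k2.+1}}) :
  \big[Rplus/R0]_(x : {ffun 'I_n -> 'I_n}) coupling (x, y)
  = \big[Rmult/R1]_(i : 'I_n) tlaw k1 k2 (y i).
Proof.
rewrite /coupling /= -(bigA_distr_bigA (fun i x => kernel x (y i))) /=.
by apply: eq_bigr => i _; rewrite kernel_marginal_A.
Qed.

Lemma coupling_is_coupling : is_coupling k1 k2 n coupling.
Proof.
split; first exact: coupling_ge0.
split; first exact: coupling_total.
split; [exact: coupling_marginal_x | exact: coupling_marginal_y].
Qed.

End Coupling.
Arguments coupling_support {k1 k2 n N w}.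

(* The number of coordinates where x_i >= N, i.e. where the coupling draws
   Xt_i independently of X_i. *)
Definition irregular (n N : nat) (x : {ffun 'I_n -> 'I_n}) : nat := #|[set i | N <= x i]%N|.

Section Comparison.
Local Open Scope nat_scope.

Lemma Ycount_le_n (n : nat) (v : 'I_n -> nat) (q : nat) : Ycount n v q <= n.
Proof. by rewrite /Ycount (leq_trans (max_card _)) ?card_ord. Qed.

Lemma sq_le_add (a b c n : nat) : a <= b + c -> a <= n -> b <= n -> a ^ 2 <= b ^ 2 + 2 * n * c.
Proof. by move=> *; nia. Qed.

Variables k1 k2 n N : nat.
Variables (x : {ffun 'I_n -> 'I_n}) (y : {ffun 'I_n -> {set 'I_k2.+1}}).
Hypothesis y_regular : forall i, x i < N -> y i = divset k1 k2 (x i).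

(* On a regular coordinate, q | X_i implies q | Xt_i; so Y_q exceeds Yt_q by
   at most the number of irregular coordinates. *)
Lemma Ycount_le (q : nat) : q \in Sprimes k1 k2 ->
  Ycount n (Xval n x) q <= Ycount n (fun i => Xtval k2 (y i)) q + irregular n N x.
Proof.
rewrite /Ycount /irregular => qS; apply: (leq_trans _ (leq_card_setU _ _)).
apply/subset_leq_card/subsetP => i; rewrite !inE /Xval => q_dvd.
case: (ltnP (x i) N) => [lt_iN | ]; last by rewrite orbT.
have q_lt : q < k2.+1 by move: qS; rewrite mem_Sprimes => /and3P [_ _]; lia.
have q_in : Ordinal q_lt \in y i by rewrite y_regular // inE /in_window qS.
by rewrite /Xtval (bigD1 (Ordinal q_lt)) //= dvdn_mulr.
Qed.

(* Summing the squares over the (at most k2) primes of S. *)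
Lemma sumsqY_le :
  sumsqY k1 k2 n (Xval n x)
  <= sumsqY k1 k2 n (fun i => Xtval k2 (y i)) + k2 * (2 * n * irregular n N x).
Proof.
rewrite /sumsqY big_seq; apply: (leq_trans (leq_sum _ (E2 := fun q =>
    Ycount n (fun i => Xtval k2 (y i)) q ^ 2 + 2 * n * irregular n N x) _)).
  by move=> q qS; apply: sq_le_add; rewrite ?Ycount_le ?Ycount_le_n.
rewrite big_split /= -big_seq leq_add2l -big_seq big_const_seq count_predT iter_addn_0.
by rewrite mulnC leq_mul2r size_Sprimes orbT.
Qed.

End Comparison.

(* The event of the theorem forces many irregular coordinates:
   n^2 eps <= sum Y_q^2 - sum Yt_q^2 <= 2 k2 n B gives B >= n eps / (2 k2). *)
Lemma event_forces_irregular {k1 k2 n N : nat}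
    {x : {ffun 'I_n -> 'I_n}} {y : {ffun 'I_n -> {set 'I_k2.+1}}} {eps : R} :
  (0 < n)%N -> (0 < k2)%N -> (forall i, (x i < N)%N -> y i = divset k1 k2 (x i)) ->
  INR n ^ 2 * eps
    <= INR (sumsqY k1 k2 n (Xval n x)) - INR (sumsqY k1 k2 n (fun i => Xtval k2 (y i))) ->
  INR n * eps / (2 * INR k2) <= INR (irregular n N x).
Proof.
move=> n_gt0 k2_gt0 y_regular event.
have /leP/le_INR := sumsqY_le k1 k2 n N x y y_regular; rewrite plus_INR !mult_INR => bound.
have n_pos : 0 < INR n by apply: lt_0_INR; lia.
have k2_pos : 0 < INR k2 by apply: lt_0_INR; lia.
have : INR n * (INR n * eps) <= INR n * (2 * INR k2 * INR (irregular n N x)).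
  by change (INR 2) with 2 in bound; nra.
move/(Rmult_le_reg_l _ _ _ n_pos) => le_eps.
apply: (Rmult_le_reg_r (2 * INR k2)); first lra.
by rewrite /Rdiv Rmult_assoc Rinv_l; lra.
Qed.

Lemma pow_le_Rpower (b t : R) (k : nat) : 0 < b <= 1 -> t <= INR k -> b ^ k <= Rpower b t.
Proof.
move=> [b_gt0 b_le1] t_le; rewrite -Rpower_pow // /Rpower.
have ln_le0 : ln b <= 0.
  case: (Req_dec b 1) => [->|b_neq1]; first by rewrite ln_1; lra.
  by rewrite -ln_1; apply/Rlt_le/ln_increasing; lra.
have [lt|->] : INR k * ln b < t * ln b \/ INR k * ln b = t * ln b by nra.
  by apply/Rlt_le/exp_increasing.
exact: Rle_refl.
Qed.

Lemma card_set_ord (n : nat) : #|{set 'I_n}| = (2 ^ n)%N.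
Proof.
rewrite -cardsT (_ : [set: {set 'I_n}] = powerset [set: 'I_n]).
  by rewrite card_powerset cardsT card_ord.
by apply/setP => B; rewrite !inE subsetT.
Qed.

Definition above (t : R) (k : nat) : R := if Rle_dec t (INR k) then 1 else 0.

Lemma above_ge0 (t : R) (k : nat) : 0 <= above t k.
Proof. by rewrite /above; case: Rle_dec => ? /=; lra. Qed.

Section UniformTail.
(* Under the uniform law on 'I_n ^ n, the number of coordinates falling in a
   set bad of density at most b is at least t with probability at most
   2^n b^t: union bound over the set T of such coordinates, the events
   "x_i \in bad for all i in T" having probability (#|bad| / n) ^ #|T|. *)
Variables (n : nat) (bad : pred 'I_n) (b t : R).
Hypothesis n_gt0 : (0 < n)%N.
Hypothesis b_range : 0 < b <= 1.
Hypothesis bad_density : INR #|bad| <= b * INR n.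

(* Weight of the event "x_i \in bad for i in T", spread as a product over
   coordinates, including the uniform density 1/n. *)
Let weight (T : {set 'I_n}) (i v : 'I_n) : R :=
  / INR n * (if i \in T then INR (bad v) else 1).

Let n_pos : 0 < INR n.
Proof. by apply: lt_0_INR; lia. Qed.

Let weight_ge0 T i v : 0 <= weight T i v.
Proof.
apply: Rmult_le_pos; first by apply/Rlt_le/Rinv_0_lt_compat.
by case: (i \in T); [exact: pos_INR | lra].
Qed.

Let indicator_le_union (x : {ffun 'I_n -> 'I_n}) :
  above t #|[set i | bad (x i)]| * (/ INR n) ^ n
  <= \big[Rplus/R0]_(T : {set 'I_n})
       (above t #|T| * \big[Rmult/R1]_(i : 'I_n) weight T i (x i)).
Proof.
rewrite (bigD1 [set i | bad (x i)]) //=.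
have -> : \big[Rmult/R1]_(i : 'I_n) weight [set i | bad (x i)] i (x i) = (/ INR n) ^ n.
  rewrite -[X in _ = _ ^ X](card_ord n) -Rprod_constT; apply: eq_bigr => i _.
  by rewrite /weight inE; case: (bad (x i)) => /=; lra.
rewrite -[X in X <= _]Rplus_0_r; apply: Rplus_le_compat_l.
apply: Rsum_ge0 => T _; apply: Rmult_le_pos; first exact: above_ge0.
by apply: Rprod_ge0 => i _; exact: weight_ge0.
Qed.

Let mass_le (T : {set 'I_n}) :
  \big[Rplus/R0]_(x : {ffun 'I_n -> 'I_n}) \big[Rmult/R1]_(i : 'I_n) weight T i (x i)
  <= b ^ #|T|.
Proof.
rewrite -(bigA_distr_bigA (weight T)) -Rprod_const [X in _ <= X]big_mkcond /=.
apply: Rprod_le => i _; split; first by apply: Rsum_ge0 => v _; exact: weight_ge0.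
rewrite -big_distrr /=; case: (i \in T).
  rewrite -INR_sum sum_indicator Rmult_comm.
  apply: (Rmult_le_reg_r (INR n)) => //.
  by rewrite Rmult_assoc Rinv_l ?Rmult_1_r; [exact: bad_density | lra].
by rewrite Rsum_constT card_ord Rmult_1_r Rinv_l; lra.
Qed.

Lemma uniform_tail :
  \big[Rplus/R0]_(x : {ffun 'I_n -> 'I_n}) (above t #|[set i | bad (x i)]| * (/ INR n) ^ n)
  <= 2 ^ n * Rpower b t.
Proof.
have per_set (T : {set 'I_n}) :
    above t #|T| * \big[Rplus/R0]_(x : {ffun 'I_n -> 'I_n})
                    \big[Rmult/R1]_(i : 'I_n) weight T i (x i) <= Rpower b t.
  apply: Rle_trans (Rmult_le_compat_l _ _ _ (above_ge0 t #|T|) (mass_le T)) _.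
  rewrite /above; case: Rle_dec => t_le; first by rewrite Rmult_1_l; exact: pow_le_Rpower.
  by rewrite Rmult_0_l /Rpower; apply/Rlt_le/exp_pos.
apply: Rle_trans (Rsum_le _ _ _ _ _ (fun x _ => indicator_le_union x)) _.
rewrite exchange_big /=; under eq_bigr do rewrite -big_distrr /=.
apply: Rle_trans (Rsum_le _ _ _ _ (fun _ => Rpower b t) (fun T _ => per_set T)) _.
by rewrite Rsum_constT card_set_ord INR_expn; change (INR 2) with 2; lra.
Qed.

End UniformTail.

Section EventBound.
Variables k1 k2 n N : nat.
Hypothesis n_gt0 : (0 < n)%N.
Hypothesis k2_gt0 : (0 < k2)%N.

Let event_le_irregular (eps : R) (w : Omega n k2) :
  (if Rle_dec (INR n ^ 2 * eps)
        (INR (sumsqY k1 k2 n (Xval n w.1)) - INR (sumsqY k1 k2 n (fun i => Xtval k2 (w.2 i))))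
   then coupling k1 k2 n N w else 0)
  <= above (INR n * eps / (2 * INR k2)) (irregular n N w.1) * coupling k1 k2 n N w.
Proof.
rewrite /above; have := coupling_ge0 k1 k2 n N n_gt0 w.
have [->|nz] := Req_dec (coupling k1 k2 n N w) 0.
  by do 2 case: Rle_dec => ? /=; lra.
case: Rle_dec => [event|?]; last by case: Rle_dec => ? /=; lra.
have := event_forces_irregular n_gt0 k2_gt0 (coupling_support nz) event.
by case: Rle_dec => [? _ ? | not_le /not_le //] /=; lra.
Qed.

Lemma event_prob_le_irregular (eps : R) :
  event_prob k1 k2 n (coupling k1 k2 n N) eps
  <= \big[Rplus/R0]_(x : {ffun 'I_n -> 'I_n})
       (above (INR n * eps / (2 * INR k2)) (irregular n N x) * (/ INR n) ^ n).
Proof.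
apply: Rle_trans (Rsum_le _ _ _ _ _ (fun w _ => event_le_irregular eps w)) _.
rewrite /Omega -(pair_big xpredT xpredT (fun x y =>
  above (INR n * eps / (2 * INR k2)) (irregular n N x) * coupling k1 k2 n N (x, y))) /=.
under eq_bigr do rewrite -big_distrr /= coupling_marginal_x //.
exact: Rle_refl.
Qed.

End EventBound.

(* Under m P <= n < (m + 1) P, the values x >= m P have density
   (n - m P) / n < P / n <= 1 / m in 'I_n. *)
Lemma irregular_density (n m P : nat) : (0 < m)%N -> (m * P <= n)%N -> (n < m.+1 * P)%N ->
  INR #|[pred v : 'I_n | m * P <= v]%N| <= / INR m * INR n.
Proof.
move=> m_gt0 lo hi; rewrite card_ord_geq //.
have m_pos : 0 < INR m by apply: lt_0_INR; lia.
have /le_INR : ((n - m * P) * m <= n)%coq_nat by apply/leP; nia.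
rewrite mult_INR => le_n.
apply: (Rmult_le_reg_r (INR m)) => //.
by rewrite (Rmult_comm (/ INR m)) Rmult_assoc Rinv_l ?Rmult_1_r; lra.
Qed.

Theorem lemma3p7 (k1 k2 n m : nat) (hk : (k1 < k2)%N) (hm : (0 < m)%N)
  (hlo : (m * primeprod k1 k2 <= n)%N) (hhi : (n < m.+1 * primeprod k1 k2)%N) :
  exists mu : Omega n k2 -> R,
    is_coupling k1 k2 n mu /\
    forall eps : R, 0 < eps ->
      event_prob k1 k2 n mu eps
        <= 2 ^ n * Rpower (/ INR m) (INR n * eps / (2 * INR k2)).
Proof.
have n_gt0 : (0 < n)%N by have := primeprod_gt0 k1 k2; nia.
have k2_gt0 : (0 < k2)%N by lia.
exists (coupling k1 k2 n (m * primeprod k1 k2)); split.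
  exact: (@coupling_is_coupling k1 k2 n _ n_gt0 m erefl hlo).
move=> eps _; apply: Rle_trans (event_prob_le_irregular _ _ _ _ n_gt0 k2_gt0 eps) _.
rewrite /irregular.
apply: (@uniform_tail n (fun v : 'I_n => m * primeprod k1 k2 <= v)%N (/ INR m)) => //.
  have m_ge1 : 1 <= INR m by apply: (le_INR 1); apply/leP.
  split; first by apply: Rinv_0_lt_compat; lra.
  by rewrite -Rinv_1; apply: Rinv_le_contravar; lra.
exact: irregular_density.
Qed.
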